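(* Let $N\ge1$, $m>1$, $\alpha,\beta\in\mathbb R$ with $N+\alpha-m>0$ and $\beta-\alpha+1>0$; let $s_0\ge0$, $\lambda>0$ and $$m-1<\wp<m^*_{\alpha,\beta}-1,\qquad m^*_{\alpha,\beta}=\frac{m(N+\beta)}{N+\alpha-m}.$$ Then every positive solution $u$ of $$-(r^{N+\alpha-1}|u'(r)|^{m-2}u'(r))'=\lambda r^{N+\beta-1}u^{\wp}(r),\ r\in(s_0,\infty),\qquad u(s_0)=1,\quad u'(s_0)\le0,$$ satisfies $\lim_{r\to\infty}r^{N+\beta}u^{\wp+1}(r)=0$. In particular $\lim_{r\to\infty}u(r)=0$.
   Context: A positive solution is a positive function $u\in C^1$ on $[s_0,\infty)$ satisfying the differential equation on $(s_0,\infty)$ (with $r^{N+\alpha-1}|u'|^{m-2}u'$ of class $C^1$ there) together with the initial conditions. *)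

From Stdlib Require Import Reals.
From Coquelicot Require Import Coquelicot.
Open Scope R_scope.

(* phi_m(t) = |t|^(m-2) t, with the continuous convention phi_m(0) = 0
   (needed when 1 < m < 2, where |0|^(m-2) is undefined). *)
Definition phi_m (m t : R) : R :=
  if Req_EM_T t 0 then 0
  else if Rlt_dec 0 t then Rpower t (m - 1) else - Rpower (- t) (m - 1).

Definition mstar (N : nat) (m alpha beta : R) : R :=
  m * (INR N + beta) / (INR N + alpha - m).

Definition positive_solution (N : nat) (m alpha beta lambda p s0 : R)
  (u : R -> R) : Prop :=
  exists du : R -> R,
    (forall r, s0 <= r -> 0 < u r) /\
    (forall r, s0 < r -> is_derive u r (du r)) /\
    filterlim (fun h => (u (s0 + h) - u s0) / h) (at_right 0) (locally (du s0)) /\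
    (forall r, s0 < r -> continuous du r) /\
    filterlim du (at_right s0) (locally (du s0)) /\
    (forall r, s0 < r ->
       is_derive (fun t => Rpower t (INR N + alpha - 1) * phi_m m (du t)) r
                 (- (lambda * Rpower r (INR N + beta - 1) * Rpower (u r) p))) /\
    u s0 = 1 /\ du s0 <= 0.

From Stdlib Require Import Reals Lra.
From Coquelicot Require Import Coquelicot.
Open Scope R_scope.

(* With A = N+alpha-1 and B = N+beta-1, the equation says that the flux
   F(r) = r^A phi_m(u'(r)) is strictly decreasing; together with u'(s0) <= 0 this
   forces u' < 0 on (s0, oo).  Since u^p is then decreasing, integrating the
   equation gives -F(r) >= c u(r)^p r^(B+1) for large r, i.e. the superlinear
   inequality -u' >= c u^q r^g with q = p/(m-1) > 1 and g = (beta-alpha+1)/(m-1).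
   Integrating it, u^(1-q) grows at least like r^(g+1), so u(r) = O(r^-k) with
   k = (beta-alpha+m)/(p-m+1).  The subcriticality p+1 < m^*_{alpha,beta} is
   exactly k(p+1) > N+beta, whence r^(N+beta) u^(p+1) -> 0. *)

Lemma Rpower_pos (x e : R) : 0 < Rpower x e.
Proof. apply exp_pos. Qed.

Lemma Rpower_opp_le (x y e : R) : 0 < e -> 0 < x <= y -> Rpower y (- e) <= Rpower x (- e).
Proof.
  intros He Hxy. rewrite !Rpower_Ropp.
  apply Rinv_le_contravar; [apply Rpower_pos|]. apply Rle_Rpower_l; lra.
Qed.

Lemma Rpower_inv_le (y z e : R) : 0 < e -> 0 < y -> 0 < z ->
  z <= Rpower y e -> Rpower z (/ e) <= y.
Proof.
  intros He Hy Hz H.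
  assert (Hle : Rpower z (/ e) <= Rpower (Rpower y e) (/ e)).
  { apply Rle_Rpower_l; [left; apply Rinv_0_lt_compat|]; lra. }
  rewrite Rpower_mult, Rinv_r, Rpower_1 in Hle by lra. exact Hle.
Qed.

Lemma Rpower_le_half (e s r : R) : 0 < e -> 0 < s ->
  Rpower 2 (/ e) * s <= r -> Rpower s e <= Rpower r e / 2.
Proof.
  intros He Hs Hr.
  assert (H2 : Rpower (Rpower 2 (/ e) * s) e = 2 * Rpower s e).
  { rewrite <- Rpower_mult_distr, Rpower_mult, Rinv_l, Rpower_1 by
      (try apply Rpower_pos; lra).
    reflexivity. }
  assert (Hle : Rpower (Rpower 2 (/ e) * s) e <= Rpower r e).
  { apply Rle_Rpower_l; [lra|]. split; [|exact Hr].
    apply Rmult_lt_0_compat; [apply Rpower_pos|lra]. }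
  lra.
Qed.

Lemma Rpower_ge_base (e s : R) : 0 <= e -> 0 < s -> s <= Rpower 2 e * s.
Proof.
  intros He Hs.
  assert (1 <= Rpower 2 e) by (rewrite <- (Rpower_O 2) by lra; apply Rle_Rpower; lra).
  nra.
Qed.

Lemma is_derive_Rpower (x e : R) : 0 < x ->
  is_derive (fun t => Rpower t e) x (e * Rpower x (e - 1)).
Proof. intros Hx. apply is_derive_Reals, derivable_pt_lim_power, Hx. Qed.

Lemma is_derive_Rpower_comp (f : R -> R) (x df e : R) : 0 < f x -> is_derive f x df ->
  is_derive (fun t => Rpower (f t) e) x (e * Rpower (f x) (e - 1) * df).
Proof.
  intros Hfx Hf.
  replace (e * Rpower (f x) (e - 1) * df) with (scal df (e * Rpower (f x) (e - 1)))
    by (unfold scal; simpl; unfold mult; simpl; ring).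
  apply (is_derive_comp (fun t => Rpower t e) f); [apply is_derive_Rpower|]; assumption.
Qed.

Lemma MVT_interval (f df : R -> R) (x y : R) : x < y ->
  (forall t, x <= t <= y -> is_derive f t (df t)) ->
  exists c, x <= c <= y /\ f y - f x = df c * (y - x).
Proof.
  intros Hxy Hd.
  destruct (MVT_gen f x y df) as [c [Hc Heq]].
  - intros t Ht. apply Hd. rewrite Rmin_left, Rmax_right in Ht; lra.
  - intros t Ht. rewrite Rmin_left, Rmax_right in Ht by lra.
    apply derivable_continuous_pt. exists (df t). apply is_derive_Reals, Hd. lra.
  - rewrite Rmin_left, Rmax_right in Hc by lra. exists c. split; assumption.
Qed.

Lemma derive_nonpos_le (f df : R -> R) (x y : R) : x <= y ->
  (forall t, x <= t <= y -> is_derive f t (df t)) ->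
  (forall t, x <= t <= y -> df t <= 0) -> f y <= f x.
Proof.
  intros Hxy Hd Hs. destruct (Req_dec x y) as [<-|Hne]; [lra|].
  destruct (MVT_interval f df x y) as [c [Hc Heq]]; [lra|exact Hd|].
  specialize (Hs c Hc). nra.
Qed.

Lemma derive_neg_lt (f df : R -> R) (x y : R) : x < y ->
  (forall t, x <= t <= y -> is_derive f t (df t)) ->
  (forall t, x <= t <= y -> df t < 0) -> f y < f x.
Proof.
  intros Hxy Hd Hs.
  destruct (MVT_interval f df x y) as [c [Hc Heq]]; [exact Hxy|exact Hd|].
  specialize (Hs c Hc). nra.
Qed.

Lemma filterlim_at_right_ge (f : R -> R) (a b c l : R) : a < b ->
  filterlim f (at_right a) (locally l) -> (forall t, a < t < b -> c <= f t) -> c <= l.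
Proof.
  intros Hab Hf Hc.
  apply (filterlim_le (F := at_right a) (fun _ => c) f c l).
  - exists (mkposreal (b - a) ltac:(lra)). intros t Ht Hat. apply Hc.
    assert (Hd : Rabs (t - a) < b - a) by exact Ht.
    apply Rabs_def2 in Hd. lra.
  - apply filterlim_const.
  - exact Hf.
Qed.

Lemma is_lim_Rpower_opp (e : R) : 0 < e -> is_lim (fun r => Rpower r (- e)) p_infty 0.
Proof.
  intros He. unfold Rpower.
  apply (is_lim_comp exp (fun r => - e * ln r) p_infty 0 m_infty).
  - exact is_lim_exp_m.
  - assert (E : Rbar_mult (- e) p_infty = m_infty).
    { simpl. destruct (Rle_dec 0 (- e)); [exfalso; lra|reflexivity]. }
    rewrite <- E. apply is_lim_scal_l, is_lim_ln_p.
  - exists 0. intros; discriminate.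
Qed.

Lemma filterlim_le_Rpower_opp (f : R -> R) (C e R0 : R) : 0 < e ->
  (forall r, R0 <= r -> 0 <= f r <= C * Rpower r (- e)) ->
  filterlim f (Rbar_locally p_infty) (locally 0).
Proof.
  intros He Hf.
  apply (filterlim_le_le (fun _ => 0) f (fun r => C * Rpower r (- e)) 0).
  - exists R0. intros r Hr. apply Hf. lra.
  - apply filterlim_const.
  - replace (Finite 0) with (Rbar_mult C 0) by (simpl; f_equal; ring).
    exact (is_lim_scal_l _ C p_infty 0 (is_lim_Rpower_opp e He)).
Qed.

Lemma phi_m_pos (m x : R) : 0 < x -> phi_m m x = Rpower x (m - 1).
Proof.
  intros Hx. unfold phi_m.
  destruct (Req_EM_T x 0); [lra|]. destruct (Rlt_dec 0 x); [reflexivity|lra].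
Qed.

Lemma phi_m_neg (m x : R) : x < 0 -> phi_m m x = - Rpower (- x) (m - 1).
Proof.
  intros Hx. unfold phi_m.
  destruct (Req_EM_T x 0); [lra|]. destruct (Rlt_dec 0 x); [lra|reflexivity].
Qed.

Lemma phi_m_ge0 (m x : R) : 0 <= x -> 0 <= phi_m m x.
Proof.
  intros Hx. destruct (Req_dec x 0) as [->|Hne].
  - unfold phi_m. destruct (Req_EM_T 0 0); [lra|congruence].
  - rewrite phi_m_pos by lra. left; apply Rpower_pos.
Qed.

Lemma phi_m_ge_inv (m c x : R) : 1 < m -> 0 < c -> c <= phi_m m x -> Rpower c (/ (m - 1)) <= x.
Proof.
  intros Hm Hc Hcx.
  assert (Hx : 0 < x).
  { destruct (Rlt_or_le 0 x) as [|Hx]; [assumption|].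
    destruct (Req_dec x 0) as [->|Hne].
    - unfold phi_m in Hcx. destruct (Req_EM_T 0 0); lra.
    - rewrite phi_m_neg in Hcx by lra. pose proof (Rpower_pos (- x) (m - 1)). lra. }
  rewrite phi_m_pos in Hcx by exact Hx.
  apply Rpower_inv_le; lra.
Qed.

Section SuperlinearDecay.

Variables (c q g R0 : R) (u du : R -> R).
Hypotheses (HR0 : 0 < R0) (Hc : 0 < c) (Hq : 1 < q) (Hg : 0 < g + 1).
Hypothesis u_derive : forall r, R0 <= r -> is_derive u r (du r).
Hypothesis u_pos : forall r, R0 <= r -> 0 < u r.
Hypothesis du_le : forall r, R0 <= r -> c * Rpower (u r) q * Rpower r g <= - du r.

Lemma superlinear_decay_integrated (r : R) : R0 <= r ->
  c * (q - 1) / (g + 1) * (Rpower r (g + 1) - Rpower R0 (g + 1))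
    <= Rpower (u r) (1 - q) - Rpower (u R0) (1 - q).
Proof.
  intros Hr.
  set (k := c * (q - 1) / (g + 1)).
  set (H t := k * Rpower t (g + 1) - Rpower (u t) (1 - q)).
  enough (H r <= H R0) by (unfold H in *; lra).
  apply (derive_nonpos_le H (fun t => k * ((g + 1) * Rpower t (g + 1 - 1))
    - (1 - q) * Rpower (u t) (1 - q - 1) * du t)); [exact Hr| |].
  - intros t Ht.
    apply (is_derive_minus (fun t => k * Rpower t (g + 1)) (fun t => Rpower (u t) (1 - q))).
    + apply is_derive_scal, is_derive_Rpower. lra.
    + apply is_derive_Rpower_comp; [apply u_pos|apply u_derive]; lra.
  - intros t Ht. simpl.
    replace (g + 1 - 1) with g by ring. replace (1 - q - 1) with (- q) by ring.
    pose proof (du_le t ltac:(lra)) as Hdu.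
    pose proof (u_pos t ltac:(lra)) as Hu.
    pose proof (Rpower_pos (u t) (- q)). pose proof (Rpower_pos t g).
    assert (Hinv : Rpower (u t) (- q) * Rpower (u t) q = 1).
    { rewrite Rpower_Ropp. apply Rinv_l. pose proof (Rpower_pos (u t) q). lra. }
    assert (Hscaled : c * Rpower t g <= Rpower (u t) (- q) * (- du t)).
    { replace (c * Rpower t g) with (Rpower (u t) (- q) * (c * Rpower (u t) q * Rpower t g))
        by (transitivity ((Rpower (u t) (- q) * Rpower (u t) q) * (c * Rpower t g));
            [ring|rewrite Hinv; ring]).
      apply Rmult_le_compat_l; lra. }
    replace (k * ((g + 1) * Rpower t g) - (1 - q) * Rpower (u t) (- q) * du t)
      with ((q - 1) * (c * Rpower t g - Rpower (u t) (- q) * (- du t)))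
      by (unfold k; field; lra).
    apply Rmult_le_0_l; lra.
Qed.

Lemma superlinear_decay_bound : exists C R1, 0 < C /\ forall r, R1 <= r ->
  u r <= C * Rpower r (- ((g + 1) / (q - 1))).
Proof.
  set (k := c * (q - 1) / (g + 1)).
  assert (Hk : 0 < k) by (apply Rdiv_lt_0_compat; [apply Rmult_lt_0_compat|]; lra).
  set (e := / (q - 1)).
  assert (He : 0 < e) by (apply Rinv_0_lt_compat; lra).
  exists (Rpower (k / 2) (- e)), (Rpower 2 (/ (g + 1)) * R0).
  split; [apply Rpower_pos|]. intros r Hr.
  assert (HR0r : R0 <= r).
  { eapply Rle_trans; [apply Rpower_ge_base|exact Hr]; [left; apply Rinv_0_lt_compat|]; lra. }
  pose proof (superlinear_decay_integrated r HR0r) as Hint.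
  pose proof (Rpower_le_half (g + 1) R0 r Hg HR0 Hr) as Hhalf.
  pose proof (Rpower_pos (u R0) (1 - q)). pose proof (Rpower_pos r (g + 1)).
  assert (Hlow : k / 2 * Rpower r (g + 1) <= Rpower (u r) (1 - q)).
  { fold k in Hint. nra. }
  assert (Hpos : 0 < k / 2 * Rpower r (g + 1)) by (apply Rmult_lt_0_compat; lra).
  pose proof (Rpower_opp_le _ _ e He (conj Hpos Hlow)) as Hdec.
  rewrite <- Rpower_mult_distr, !Rpower_mult in Hdec by lra.
  replace ((1 - q) * - e) with 1 in Hdec by (unfold e; field; lra).
  rewrite Rpower_1 in Hdec by (apply u_pos; exact HR0r).
  replace (- ((g + 1) / (q - 1))) with ((g + 1) * - e) by (unfold e; field; lra).
  exact Hdec.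
Qed.

End SuperlinearDecay.

Section RadialFlux.

Variables (A B m lambda p s0 : R) (u du : R -> R).

Let flux (t : R) : R := Rpower t A * phi_m m (du t).

Hypotheses (HA : 0 < A) (HBA : A < B + 1) (Hm : 1 < m) (Hlam : 0 < lambda)
  (Hpm : m - 1 < p) (Hs0 : 0 <= s0).
Hypothesis u_pos : forall r, s0 <= r -> 0 < u r.
Hypothesis u_derive : forall r, s0 < r -> is_derive u r (du r).
Hypothesis du_right_lim : filterlim du (at_right s0) (locally (du s0)).
Hypothesis du_s0 : du s0 <= 0.
Hypothesis flux_derive : forall r, s0 < r ->
  is_derive flux r (- (lambda * Rpower r B * Rpower (u r) p)).

Lemma flux_lt (x y : R) : s0 < x < y -> flux y < flux x.
Proof.
  intros Hxy.
  apply (derive_neg_lt flux (fun r => - (lambda * Rpower r B * Rpower (u r) p))); [lra| |].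
  - intros t Ht. apply flux_derive. lra.
  - intros t _. pose proof (Rpower_pos t B). pose proof (Rpower_pos (u t) p).
    assert (0 < Rpower t B * Rpower (u t) p) by (apply Rmult_lt_0_compat; lra).
    nra.
Qed.

Lemma du_neg (r : R) : s0 < r -> du r < 0.
Proof.
  (* Otherwise the decreasing flux stays above flux r' > 0 on (s0, r'), which keeps
     u' bounded away from 0 there and contradicts u'(s0) <= 0. *)
  intros Hr. destruct (Rlt_or_le (du r) 0) as [|Hdur]; [assumption|exfalso].
  set (r' := (s0 + r) / 2).
  assert (Hflux_r : 0 <= flux r).
  { apply Rmult_le_pos; [left; apply Rpower_pos|apply phi_m_ge0, Hdur]. }
  assert (Hd : 0 < flux r') by (pose proof (flux_lt r' r); unfold r' in *; lra).
  pose proof (Rpower_pos r' A) as Hr'A.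
  assert (Hlow : forall t, s0 < t < r' -> Rpower (flux r' / Rpower r' A) (/ (m - 1)) <= du t).
  { intros t Ht. apply phi_m_ge_inv; [exact Hm|apply Rdiv_lt_0_compat; assumption|].
    assert (Hlt : flux r' < flux t) by (apply flux_lt; lra).
    assert (HtA : Rpower t A <= Rpower r' A) by (apply Rle_Rpower_l; lra).
    pose proof (Rpower_pos t A).
    unfold flux at 2 in Hlt.
    apply (Rmult_le_reg_l (Rpower r' A)); [exact Hr'A|].
    replace (Rpower r' A * (flux r' / Rpower r' A)) with (flux r') by (field; lra).
    assert (0 < phi_m m (du t)) by nra.
    nra. }
  pose proof (filterlim_at_right_ge du s0 r' _ (du s0)
    ltac:(unfold r'; lra) du_right_lim Hlow).
  pose proof (Rpower_pos (flux r' / Rpower r' A) (/ (m - 1))). lra.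
Qed.

Lemma flux_energy (s1 r : R) : s0 < s1 -> s1 <= r ->
  flux r + lambda / (B + 1) * Rpower (u r) p * (Rpower r (B + 1) - Rpower s1 (B + 1))
    <= flux s1.
Proof.
  intros Hs1 Hr.
  set (c := lambda / (B + 1)).
  set (G t := flux t + c * Rpower (u t) p * (Rpower t (B + 1) - Rpower s1 (B + 1))).
  (* In G' the terms lambda t^B u^p cancel, leaving one with the sign of u'. *)
  replace (flux s1) with (G s1) by (unfold G; ring).
  apply (derive_nonpos_le G
    (fun t => - (lambda * Rpower t B * Rpower (u t) p)
      + (c * (p * Rpower (u t) (p - 1) * du t) * (Rpower t (B + 1) - Rpower s1 (B + 1))
         + c * Rpower (u t) p * ((B + 1) * Rpower t (B + 1 - 1) - 0)))); [exact Hr| |].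
  - intros t Ht.
    apply (is_derive_plus flux); [apply flux_derive; lra|].
    apply (is_derive_mult (fun t => c * Rpower (u t) p)
      (fun t => Rpower t (B + 1) - Rpower s1 (B + 1))); [| |intros; apply Rmult_comm].
    + apply is_derive_scal, is_derive_Rpower_comp; [apply u_pos|apply u_derive]; lra.
    + apply (is_derive_minus (fun t => Rpower t (B + 1)) (fun _ => Rpower s1 (B + 1)));
        [|exact (is_derive_const (Rpower s1 (B + 1)) t)].
      apply is_derive_Rpower. lra.
  - intros t Ht. simpl.
    replace (B + 1 - 1) with B by ring.
    assert (Hpow : Rpower s1 (B + 1) <= Rpower t (B + 1)) by (apply Rle_Rpower_l; lra).
    assert (Hdu : p * Rpower (u t) (p - 1) * du t < 0).
    { apply Rmult_pos_neg; [apply Rmult_lt_0_compat; [lra|apply Rpower_pos]|apply du_neg; lra]. }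
    assert (Hc : 0 < c) by (apply Rdiv_lt_0_compat; lra).
    replace (c * Rpower (u t) p * ((B + 1) * Rpower t B - 0))
      with (lambda * Rpower t B * Rpower (u t) p) by (unfold c; field; lra).
    assert (0 <= c * (- (p * Rpower (u t) (p - 1) * du t)) * (Rpower t (B + 1) - Rpower s1 (B + 1))).
    { apply Rmult_le_pos; [apply Rmult_le_pos|]; lra. }
    lra.
Qed.

Lemma flux_dominates (s1 r : R) : s0 < s1 -> Rpower 2 (/ (B + 1)) * s1 <= r ->
  lambda / (2 * (B + 1)) * Rpower (u r) p * Rpower r (B + 1 - A)
    <= Rpower (- du r) (m - 1).
Proof.
  intros Hs1 Hr.
  assert (HR0 : s1 <= r).
  { eapply Rle_trans; [apply Rpower_ge_base|exact Hr]; [left; apply Rinv_0_lt_compat|]; lra. }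
  pose proof (flux_energy s1 r Hs1 HR0) as Henergy.
  pose proof (Rpower_le_half (B + 1) s1 r ltac:(lra) ltac:(lra) Hr) as Hhalf.
  assert (Hflux_s1 : flux s1 < 0).
  { unfold flux. rewrite phi_m_neg by (apply du_neg; lra).
    pose proof (Rpower_pos s1 A). pose proof (Rpower_pos (- du s1) (m - 1)). nra. }
  assert (Hflux_r : flux r = - (Rpower r A * Rpower (- du r) (m - 1))).
  { unfold flux. rewrite phi_m_neg by (apply du_neg; lra). ring. }
  assert (Hsplit : Rpower r (B + 1) = Rpower r A * Rpower r (B + 1 - A)).
  { rewrite <- Rpower_plus. f_equal. ring. }
  pose proof (Rpower_pos r A). pose proof (Rpower_pos r (B + 1 - A)).
  pose proof (Rpower_pos (u r) p).
  assert (Hc : 0 < lambda / (B + 1)) by (apply Rdiv_lt_0_compat; lra).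
  apply (Rmult_le_reg_l (Rpower r A)); [assumption|].
  replace (Rpower r A * (lambda / (2 * (B + 1)) * Rpower (u r) p * Rpower r (B + 1 - A)))
    with (lambda / (B + 1) * Rpower (u r) p * (Rpower r (B + 1) / 2))
    by (rewrite Hsplit; field; lra).
  assert (lambda / (B + 1) * Rpower (u r) p * (Rpower r (B + 1) / 2)
    <= lambda / (B + 1) * Rpower (u r) p * (Rpower r (B + 1) - Rpower s1 (B + 1))).
  { apply Rmult_le_compat_l; [left; apply Rmult_lt_0_compat|]; lra. }
  lra.
Qed.

Lemma neg_du_lower_bound : exists c R0, 0 < c /\ s0 < R0 /\ forall r, R0 <= r ->
  c * Rpower (u r) (p / (m - 1)) * Rpower r ((B + 1 - A) / (m - 1)) <= - du r.
Proof.
  set (s1 := s0 + 1).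
  exists (Rpower (lambda / (2 * (B + 1))) (/ (m - 1))), (Rpower 2 (/ (B + 1)) * s1).
  split; [apply Rpower_pos|]. split.
  { eapply Rlt_le_trans; [|apply Rpower_ge_base]; unfold s1;
      [|left; apply Rinv_0_lt_compat|]; lra. }
  intros r Hr.
  assert (Hr0 : s0 < r).
  { eapply Rlt_le_trans; [|eapply Rle_trans; [apply Rpower_ge_base|exact Hr]];
      unfold s1; [|left; apply Rinv_0_lt_compat|]; lra. }
  pose proof (flux_dominates s1 r ltac:(unfold s1; lra) Hr) as Hdom.
  assert (Hc0 : 0 < lambda / (2 * (B + 1))) by (apply Rdiv_lt_0_compat; lra).
  pose proof (u_pos r ltac:(lra)). pose proof (du_neg r Hr0).
  apply (Rpower_inv_le (- du r) _ (m - 1)) in Hdom; [|lra|lra|].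
  2:{ apply Rmult_lt_0_compat; [apply Rmult_lt_0_compat|]; try apply Rpower_pos; lra. }
  pose proof (Rpower_pos (u r) p). pose proof (Rpower_pos r (B + 1 - A)).
  rewrite <- !Rpower_mult_distr, !Rpower_mult in Hdom
    by (assumption || apply Rmult_lt_0_compat; assumption).
  exact Hdom.
Qed.

Lemma u_power_decay : exists C R1, 0 < C /\ s0 < R1 /\ forall r, R1 <= r ->
  u r <= C * Rpower r (- ((B + 1 - A + (m - 1)) / (p - (m - 1)))).
Proof.
  destruct neg_du_lower_bound as [c [R0 [Hc [HR0 Hdu]]]].
  destruct (superlinear_decay_bound c (p / (m - 1)) ((B + 1 - A) / (m - 1)) R0 u du)
    as [C [R1 [HC Hu]]]; try assumption.
  - lra.
  - apply (Rmult_lt_reg_r (m - 1)); [lra|].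
    unfold Rdiv. rewrite Rmult_assoc, Rinv_l by lra. lra.
  - apply Rplus_lt_le_0_compat; [apply Rdiv_lt_0_compat|]; lra.
  - intros r Hr. apply u_derive. lra.
  - intros r Hr. apply u_pos. lra.
  - exists C, (Rmax R1 (s0 + 1)). split; [exact HC|]. split.
    + pose proof (Rmax_r R1 (s0 + 1)). lra.
    + intros r Hr.
      replace ((B + 1 - A + (m - 1)) / (p - (m - 1)))
        with (((B + 1 - A) / (m - 1) + 1) / (p / (m - 1) - 1)) by (field; lra).
      apply Hu. pose proof (Rmax_l R1 (s0 + 1)). lra.
Qed.

End RadialFlux.

Lemma Rpower_weighted_le (a b C k r x : R) : 0 < r -> 0 < x -> 0 <= b ->
  x <= C * Rpower r (- k) -> Rpower r a * Rpower x b <= Rpower C b * Rpower r (- (k * b - a)).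
Proof.
  intros Hr Hx Hb Hxr.
  pose proof (Rpower_pos r (- k)). pose proof (Rpower_pos r a).
  assert (HC : 0 < C) by nra.
  assert (Hxb : Rpower x b <= Rpower C b * Rpower r (- k * b)).
  { rewrite <- Rpower_mult. rewrite Rpower_mult_distr by (try apply Rpower_pos; lra).
    apply Rle_Rpower_l; lra. }
  replace (- (k * b - a)) with (a + - k * b) by ring.
  rewrite Rpower_plus.
  replace (Rpower C b * (Rpower r a * Rpower r (- k * b)))
    with (Rpower r a * (Rpower C b * Rpower r (- k * b))) by ring.
  apply Rmult_le_compat_l; lra.
Qed.

Lemma mstar_decay_gap (N : nat) (m alpha beta p : R) :
  0 < INR N + alpha - m -> m - 1 < p -> p < mstar N m alpha beta - 1 ->
  INR N + beta < (beta - alpha + m) / (p - m + 1) * (p + 1).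
Proof.
  intros HNa Hp1 Hp2.
  assert (Hmstar : mstar N m alpha beta * (INR N + alpha - m) = m * (INR N + beta))
    by (unfold mstar; field; lra).
  assert (Hlt : (p + 1) * (INR N + alpha - m) < m * (INR N + beta)) by nra.
  apply (Rmult_lt_reg_r (p - m + 1)); [lra|].
  replace ((beta - alpha + m) / (p - m + 1) * (p + 1) * (p - m + 1))
    with ((beta - alpha + m) * (p + 1)) by (field; lra).
  nra.
Qed.

Theorem corollary3p1 (N : nat) (m alpha beta s0 lambda p : R) (u : R -> R) :
  (1 <= N)%nat -> 1 < m ->
  0 < INR N + alpha - m -> 0 < beta - alpha + 1 ->
  0 <= s0 -> 0 < lambda ->
  m - 1 < p -> p < mstar N m alpha beta - 1 ->
  positive_solution N m alpha beta lambda p s0 u ->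
  filterlim (fun r => Rpower r (INR N + beta) * Rpower (u r) (p + 1))
            (Rbar_locally p_infty) (locally 0) /\
  filterlim u (Rbar_locally p_infty) (locally 0).
Proof.
  intros _ Hm HNa Hba Hs0 Hl Hp1 Hp2 [du [Hpos [Hder [_ [_ [Hdu_lim [Hflux [_ Hdu0]]]]]]]].
  destruct (u_power_decay (INR N + alpha - 1) (INR N + beta - 1) m lambda p s0 u du)
    as [C [R1 [HC [HR1 Hu]]]]; try assumption; try lra.
  set (k := (beta - alpha + m) / (p - m + 1)).
  replace ((INR N + beta - 1 + 1 - (INR N + alpha - 1) + (m - 1)) / (p - (m - 1)))
    with k in Hu by (unfold k; field; lra).
  assert (Hk : 0 < k) by (apply Rdiv_lt_0_compat; lra).
  split.
  - apply (filterlim_le_Rpower_opp _ (Rpower C (p + 1)) (k * (p + 1) - (INR N + beta)) R1).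
    { pose proof (mstar_decay_gap N m alpha beta p HNa Hp1 Hp2). unfold k. lra. }
    intros r Hr. pose proof (Hpos r ltac:(lra)).
    split; [left; apply Rmult_lt_0_compat; apply Rpower_pos|].
    apply Rpower_weighted_le; try apply Hu; lra.
  - apply (filterlim_le_Rpower_opp u C k R1 Hk).
    intros r Hr. pose proof (Hpos r ltac:(lra)). pose proof (Hu r Hr). lra.
Qed.
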